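(* Let $n,m\ge1$ be integers (not necessarily distinct). Then for the Ramsey number $\mathcal{R}_{\mathcal{IDM}}$ with respect to the class $\mathcal{IDM}$ of idempotents graphs, \[ \mathcal{R}_{\mathcal{IDM}}(n,m)=\mathcal{R}_{\mathcal{PO}}(n,m)=(n-1)(m-1)+1 . \]
   Context: For a commutative ring $R$ (with $1\ne0$), the idempotents graph $\mathrm{Idm}(R)$ is the simple undirected graph whose vertices are the idempotents of $R$ ($a^2=a$), distinct $a,b$ adjacent iff $a\mid b$ or $b\mid a$; $\mathcal{IDM}$ is the class of all idempotents graphs of commutative rings. $\mathcal{PO}$ is the class of partial order graphs $G_A$ of posets $(A,\le)$ (distinct vertices adjacent iff comparable). For a class $\mathcal{C}$ of graphs, $\mathcal{R}_{\mathcal{C}}(n,m)$ is the minimal $r$ such that every induced subgraph with $r$ vertices of any graph in $\mathcal{C}$ contains either $K_n$ or an independent set of $m$ vertices. *)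

From mathcomp Require Import all_boot all_algebra.
Set Implicit Arguments. Unset Strict Implicit. Unset Printing Implicit Defensive.
Import GRing.Theory.
Local Open Scope ring_scope.

(* Generic Ramsey property of a (possibly infinite) simple graph with vertex
   predicate [vert] on a type [V] and adjacency [adj]:
   every induced subgraph on r distinct vertices (an injective r-tuple of
   vertices) contains K_n (n distinct pairwise adjacent vertices) or an
   independent set of m distinct vertices. *)
Definition ramsey_ok (V : Type) (vert : V -> Prop) (adj : V -> V -> Prop)
    (n m r : nat) : Prop :=
  forall f : 'I_r -> V, injective f -> (forall i, vert (f i)) ->
    (exists g : 'I_n -> 'I_r, injective g /\
       forall i j, i != j -> adj (f (g i)) (f (g j)))
    \/
    (exists g : 'I_m -> 'I_r, injective g /\
       forall i j, i != j -> ~ adj (f (g i)) (f (g j))).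

Definition rdvd (R : comNzRingType) (a b : R) : Prop := exists c : R, b = a * c.

Definition idempotent (R : comNzRingType) (a : R) : Prop := a * a = a.
Definition idm_adj (R : comNzRingType) (a b : R) : Prop :=
  a <> b /\ (rdvd a b \/ rdvd b a).

Definition ramsey_IDM (n m r : nat) : Prop :=
  forall R : comNzRingType, ramsey_ok (@idempotent R) (@idm_adj R) n m r.

Definition is_poset (A : Type) (le : A -> A -> Prop) : Prop :=
  (forall x, le x x) /\
  (forall x y, le x y -> le y x -> x = y) /\
  (forall x y z, le x y -> le y z -> le x z).
Definition po_adj (A : Type) (le : A -> A -> Prop) (x y : A) : Prop :=
  x <> y /\ (le x y \/ le y x).

Definition ramsey_PO (n m r : nat) : Prop :=
  forall (A : Type) (le : A -> A -> Prop), is_poset le ->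
    ramsey_ok (fun _ : A => True) (po_adj le) n m r.

Definition is_min_nat (good : nat -> Prop) (k : nat) : Prop :=
  good k /\ forall r, good r -> (k <= r)%N.

(* Both graphs are comparability graphs of partial orders: on idempotents,
   a | b and b | a force a = ab = b.  The upper bound is Mirsky's theorem:
   in a finite poset with more than (n-1)(m-1) elements, either the maximal
   elements form an antichain of size m, or removing them leaves more than
   (n-2)(m-1) elements, hence by induction a chain of n-1 elements whose top
   lies below a removed maximal element.  The lower bound is the disjoint
   union of m-1 chains of n-1 elements: the grid 'I_(m-1) * 'I_(n-1) ordered
   within columns, realised among the idempotents of F_2^X by indicators of
   the sets {c} u {j >= l}, on which divisibility is reverse inclusion. *)
From Pilot Require Import Defs.
From HB Require Import structures.
From mathcomp Require Import all_boot all_algebra.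
From mathcomp Require Import zify boolp.
Import GRing.Theory.
Set Implicit Arguments.
Unset Strict Implicit.
Unset Printing Implicit Defensive.

Lemma ord_inj_of_leq_card (T : finType) (A : {pred T}) k :
  k <= #|A| -> {g : 'I_k -> T | injective g & forall i, g i \in A}.
Proof.
move=> leA; exists (fun i => enum_val (widen_ord leA i)); last first.
  by move=> i; apply: enum_valP.
by move=> i j /enum_val_inj /(congr1 val) eq_ij; apply: val_inj.
Qed.

Section Mirsky.

Variables (T : finType) (le : rel T).
Hypotheses (le_refl : reflexive le) (le_anti : antisymmetric le)
  (le_trans : transitive le).

Let lt x y := (y != x) && le x y.

Let lt_trans : transitive lt.
Proof.
move=> y x z /andP[yx lexy] /andP[zy leyz]; rewrite /lt (le_trans lexy leyz) andbT.
apply: contra_neq yx => zx; rewrite zx in leyz.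
by apply: le_anti; rewrite leyz lexy.
Qed.

Lemma sorted_chain_or_antichain n m (A : {set T}) : n * m < #|A| ->
  (exists s : seq T, [/\ size s = n.+1, {subset s <= A} & sorted lt s]) \/
  (exists2 B : {set T}, m < #|B| & {in B &, forall x y, x != y -> ~~ le x y}).
Proof.
elim: n A => [|n IH] A hA.
  have [a aA] : exists a, a \in A by apply/set0Pn; rewrite -card_gt0.
  by left; exists [:: a]; split=> // x; rewrite inE => /eqP->.
pose M := [set x in A | [forall y in A, le x y ==> (y == x)]].
have [wideM | narrowM] := ltnP m #|M|.
  right; exists M => // x y; rewrite !inE => /andP[_ /forall_inP maxx] /andP[yA _].
  by apply: contra => lexy; rewrite eq_sym (implyP (maxx y yA)).
have sMA : M \subset A by apply/subsetP => x; rewrite inE => /andP[].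
have hAM : n * m < #|A :\: M|.
  by move: hA; rewrite -(cardsID M A) (setIidPr sMA) mulSn; lia.
have [[s [sz sA ss]] | ?] := IH _ hAM; last by right.
case: s sz sA ss => [|x0 s] // sz sA ss.
have /setDP[tA tM] : last x0 s \in A :\: M by apply: sA; apply: mem_last.
have [y yA /andP[le_ty y_t]] : exists2 y, y \in A & le (last x0 s) y && (y != last x0 s).
  move: tM; rewrite inE tA /= => /forall_inPn[y yA]; rewrite negb_imply.
  by exists y.
have subA : {subset x0 :: s <= A} by move=> x /sA /setDP[].
left; exists (x0 :: rcons s y); split.
- by rewrite /= size_rcons -sz.
- by move=> x; rewrite -rcons_cons mem_rcons inE => /predU1P[->|/subA].
- by rewrite /= rcons_path [path _ _ _]ss /lt y_t le_ty.
Qed.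

Theorem mirsky n m : n * m < #|T| ->
  (exists2 C : {set T}, n < #|C| & {in C &, forall x y, le x y || le y x}) \/
  (exists2 B : {set T}, m < #|B| & {in B &, forall x y, x != y -> ~~ le x y}).
Proof.
rewrite -cardsT => /sorted_chain_or_antichain[[s [sz _ ss]] | ?]; last by right.
have lt_irr : irreflexive lt by move=> x; rewrite /lt eqxx.
left; exists [set x in s].
  by rewrite cardsE (card_uniqP (sorted_uniq lt_trans lt_irr ss)) sz.
pose cmp x y := le x y || le y x.
have cmp_refl : reflexive cmp by move=> x; rewrite /cmp le_refl.
have cmp_sym : symmetric cmp by move=> x y; rewrite /cmp orbC.
have lt_cmp : subrel lt cmp by move=> x y /andP[_ lexy]; rewrite /cmp lexy.
have /allrelP cmp_s : all2rel cmp s.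
  by rewrite -pairwise_all2rel // (sub_pairwise lt_cmp) // -sorted_pairwise.
by move=> x y; rewrite !inE; apply: cmp_s.
Qed.

End Mirsky.

Lemma ramsey_ok_leq (V : Type) (vert : V -> Prop) (adj : V -> V -> Prop) n m r r' :
  r <= r' -> ramsey_ok vert adj n m r -> ramsey_ok vert adj n m r'.
Proof.
move=> le_rr' ok f finj fv.
have widen_inj : injective (widen_ord le_rr').
  by move=> i j /(congr1 val) eq_ij; apply: val_inj.
have [[g [ginj clique]] | [g [ginj indep]]] :=
  ok _ (inj_comp finj widen_inj) (fun i => fv _).
- by left; exists (widen_ord le_rr' \o g); split=> //; apply: inj_comp.
- by right; exists (widen_ord le_rr' \o g); split=> //; apply: inj_comp.
Qed.

Lemma is_min_nat_succ (good : nat -> Prop) k :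
  (forall r r', r <= r' -> good r -> good r') -> good k.+1 -> ~ good k ->
  is_min_nat good k.+1.
Proof.
move=> good_mono good_k1 not_good_k; split=> // r good_r.
by case: (leqP r k) => // le_rk; case: not_good_k; apply: good_mono good_r.
Qed.

Section ComparabilityGraph.

Variables (V : Type) (vert : V -> Prop) (le : V -> V -> Prop).
Hypotheses (le_refl : forall x, vert x -> le x x)
  (le_anti : forall x y, vert x -> vert y -> le x y -> le y x -> x = y)
  (le_trans : forall x y z, vert x -> vert y -> vert z -> le x y -> le y z -> le x z).

Lemma ramsey_ok_po_adj n m : ramsey_ok vert (po_adj le) n.+1 m.+1 (n * m).+1.
Proof.
move=> f finj fv; pose leI i j := `[< le (f i) (f j) >].
have leI_refl : reflexive leI by move=> i; apply/asboolP/le_refl.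
have leI_anti : antisymmetric leI.
  by move=> i j /andP[/asboolP leij /asboolP leji]; apply/finj/le_anti.
have leI_trans : transitive leI.
  move=> j i k /asboolP leij /asboolP lejk; apply/asboolP.
  exact: le_trans leij lejk.
have card_r : n * m < #|'I_(n * m).+1| by rewrite card_ord.
have [[C hC chainC] | [B hB antiB]] := mirsky leI_refl leI_anti leI_trans card_r.
- left; have [g ginj gC] := ord_inj_of_leq_card hC; exists g; split=> // i j ij.
  split; first by move/finj/ginj/eqP; rewrite (negbTE ij).
  by have /orP[/asboolP|/asboolP] := chainC _ _ (gC i) (gC j); [left | right].
- right; have [g ginj gB] := ord_inj_of_leq_card hB; exists g; split=> // i j ij.
  have gij : g i != g j by rewrite (inj_eq ginj).
  have gji : g j != g i by rewrite eq_sym.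
  move=> [_ [/asboolP leij | /asboolP leji]].
    by move/negP: (antiB _ _ (gB i) (gB j) gij).
  by move/negP: (antiB _ _ (gB j) (gB i) gji).
Qed.

End ComparabilityGraph.

Lemma not_ramsey_ok_grid (V : Type) (vert : V -> Prop) (le : V -> V -> Prop) n m
    (f : 'I_m * 'I_n -> V) :
  (forall x, vert (f x)) -> (forall x y, le (f x) (f y) <-> x.1 = y.1 /\ x.2 <= y.2) ->
  ~ ramsey_ok vert (po_adj le) n.+1 m.+1 (n * m).
Proof.
move=> fv leE.
have finj : injective f.
  move=> [a b] [c d] fxy.
  have [/leE[/= ac bd] /leE[_ db]] : le (f (a, b)) (f (c, d)) /\ le (f (c, d)) (f (a, b)).
    by rewrite fxy; split; apply/leE.
  by rewrite ac; congr pair; apply/val_inj/eqP; rewrite eqn_leq bd db.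
have adjE x y : x != y -> po_adj le (f x) (f y) <-> x.1 = y.1.
  move=> xy; split=> [[_ [/leE[] | /leE[]]] // -> // | col_xy].
  split; first by move/finj/eqP; rewrite (negbTE xy).
  by case: (leqP x.2 y.2) => [le_xy | /ltnW le_yx]; [left | right]; apply/leE.
have card_grid : #|{: 'I_m * 'I_n}| = n * m by rewrite card_prod !card_ord mulnC.
pose e (i : 'I_(n * m)) := enum_val (cast_ord (esym card_grid) i).
have einj : injective e by move=> i j /enum_val_inj/cast_ord_inj.
case/(_ (f \o e) (inj_comp finj einj) (fun i => fv _)) =>
  [[g [ginj clique]] | [g [ginj indep]]].
- have col i j : (e (g i)).1 = (e (g j)).1.
    case: (eqVneq i j) => [-> // | ij].
    have eij : e (g i) != e (g j) by rewrite (inj_eq einj) (inj_eq ginj).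
    exact/(adjE _ _ eij)/clique.
  have row_inj : injective (fun i => (e (g i)).2).
    move=> i j row_ij; apply/ginj/einj.
    by move: (col i j) row_ij; case: (e (g i)) => ? ?; case: (e (g j)) => ? ? /= -> ->.
  by have := leq_card _ row_inj; rewrite !card_ord ltnn.
- have col_inj : injective (fun i => (e (g i)).1).
    move=> i j col_ij; apply/eqP/negP => /negP ij; apply: (indep i j ij).
    have eij : e (g i) != e (g j) by rewrite (inj_eq einj) (inj_eq ginj).
    exact/(adjE _ _ eij).
  by have := leq_card _ col_inj; rewrite !card_ord ltnn.
Qed.

Section IdempotentDivisibility.

Variable R : comNzRingType.

Lemma rdvd_refl (a : R) : rdvd a a.
Proof. by exists 1%R; rewrite mulr1. Qed.

Lemma rdvd_trans (a b c : R) : rdvd a b -> rdvd b c -> rdvd a c.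
Proof. by move=> [d ->] [d' ->]; exists (d * d')%R; rewrite mulrA. Qed.

Lemma idempotent_rdvd_anti (a b : R) :
  Defs.idempotent a -> Defs.idempotent b -> rdvd a b -> rdvd b a -> a = b.
Proof.
move=> idem_a idem_b [c b_ac] [d a_bd].
have ab_b : (a * b = b)%R by rewrite b_ac mulrA idem_a.
have ba_a : (b * a = a)%R by rewrite a_bd mulrA idem_b.
by rewrite -ba_a mulrC ab_b.
Qed.

End IdempotentDivisibility.

(* The extra point [None] makes the ring nontrivial even for an empty [T]. *)
Definition boolfun (T : finType) := {ffun option T -> 'F_2}.

HB.instance Definition _ (T : finType) :=
  GRing.PzRing.copy (boolfun T) {ffun option T -> 'F_2}.

Lemma boolfun_mulC (T : finType) : commutative (@GRing.mul (boolfun T)).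
Proof. by move=> f g; apply/ffunP => x; rewrite !ffunE mulrC. Qed.

HB.instance Definition _ (T : finType) :=
  GRing.PzSemiRing_hasCommutativeMul.Build (boolfun T) (@boolfun_mulC T).

Lemma boolfun_oner_neq0 (T : finType) : (1%R : boolfun T) != 0%R.
Proof. by apply/eqP => /ffunP/(_ None); rewrite !ffunE. Qed.

HB.instance Definition _ (T : finType) :=
  GRing.PzSemiRing_isNonZero.Build (boolfun T) (@boolfun_oner_neq0 T).

Definition indicator (T : finType) (A : {set option T}) : boolfun T :=
  [ffun x => ((x \in A)%:R)%R].

Lemma idempotent_indicator (T : finType) (A : {set option T}) :
  Defs.idempotent (indicator A).
Proof. by apply/ffunP => x; rewrite !ffunE; case: (x \in A); rewrite ?mulr0 ?mulr1. Qed.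

Lemma rdvd_indicator (T : finType) (A B : {set option T}) :
  rdvd (indicator A) (indicator B) <-> B \subset A.
Proof.
split=> [[c /ffunP B_Ac] | sBA].
  apply/subsetP => x xB; move: (B_Ac x); rewrite !ffunE xB.
  by case: (x \in A) => //; rewrite mul0r => /eqP; rewrite oner_eq0.
exists (indicator B); apply/ffunP => x; rewrite !ffunE.
by case: (boolP (x \in B)) => [xB | _]; rewrite ?(subsetP sBA x xB) ?mulr1 ?mulr0.
Qed.

Definition grid_set m n (x : 'I_m * 'I_n) : {set option ('I_m + 'I_n)} :=
  [set z : option ('I_m + 'I_n) |
    match z with
    | Some (inl c) => c == x.1
    | Some (inr j) => x.2 <= j
    | None => false
    end].

Lemma grid_set_subset m n (x y : 'I_m * 'I_n) :
  (grid_set y \subset grid_set x) = (x.1 == y.1) && (x.2 <= y.2).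
Proof.
apply/subsetP/andP => [sub_yx | [/eqP col_xy le_xy] [[c | j] |]] //.
- have := sub_yx (Some (inl y.1)); have := sub_yx (Some (inr y.2)).
  by rewrite !inE !eqxx leqnn => /(_ isT) le_xy /(_ isT) /eqP ->.
- by rewrite !inE col_xy.
- by rewrite !inE => /(leq_trans le_xy).
- by rewrite inE.
Qed.

Lemma ramsey_PO_mulS n m : ramsey_PO n.+1 m.+1 (n * m).+1.
Proof.
move=> A le [le_refl [le_anti le_trans]].
by apply: ramsey_ok_po_adj => [x _ | x y _ _ | x y z _ _ _];
  [apply: le_refl | apply: le_anti | apply: le_trans].
Qed.

Lemma ramsey_IDM_mulS n m : ramsey_IDM n.+1 m.+1 (n * m).+1.
Proof.
move=> R; apply: (ramsey_ok_po_adj (le := @rdvd R)).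
- by move=> a _; apply: rdvd_refl.
- exact: idempotent_rdvd_anti.
- by move=> a b c _ _ _; apply: rdvd_trans.
Qed.

Lemma not_ramsey_PO_mul n m : ~ ramsey_PO n.+1 m.+1 (n * m).
Proof.
pose le (x y : 'I_m * 'I_n) := x.1 = y.1 /\ x.2 <= y.2.
have le_poset : is_poset le.
  split; first by move=> x; split.
  split; last first.
    move=> x y z [col_xy le_xy] [col_yz le_yz].
    by split; [rewrite col_xy | apply: leq_trans le_yz].
  move=> [a b] [c d] [/= -> le_bd] [_ le_db].
  by congr pair; apply/val_inj/eqP; rewrite eqn_leq le_bd le_db.
by move/(_ _ le le_poset); apply: (not_ramsey_ok_grid (f := id)).
Qed.

Lemma not_ramsey_IDM_mul n m : ~ ramsey_IDM n.+1 m.+1 (n * m).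
Proof.
move/(_ (boolfun ('I_m + 'I_n)%type)).
apply: (not_ramsey_ok_grid (le := @rdvd _) (f := fun x => indicator (grid_set x))).
  by move=> x; apply: idempotent_indicator.
move=> x y; rewrite rdvd_indicator grid_set_subset.
by split=> [/andP[/eqP -> ->] | [-> ->]]; rewrite ?eqxx.
Qed.

Theorem theorem3p21 (n m : nat) (hn : (1 <= n)%N) (hm : (1 <= m)%N) :
  is_min_nat (ramsey_IDM n m) ((n - 1) * (m - 1) + 1)%N /\
  is_min_nat (ramsey_PO n m) ((n - 1) * (m - 1) + 1)%N.
Proof.
case: n hn => // n _; case: m hm => // m _; rewrite !subn1 /= addn1.
split; apply: is_min_nat_succ.
- by move=> r r' le_rr' ok R; apply: ramsey_ok_leq le_rr' (ok R).
- exact: ramsey_IDM_mulS.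
- exact: not_ramsey_IDM_mul.
- by move=> r r' le_rr' ok A le le_poset; apply: ramsey_ok_leq le_rr' (ok A le le_poset).
- exact: ramsey_PO_mulS.
- exact: not_ramsey_PO_mul.
Qed.
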